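(* Let $f=f_0+f_1i+f_2j+f_3k\colon M\to\mathbb H$ be a minimal surface with conjugate $f^*=f_0^*+f_1^*i+f_2^*j+f_3^*k$ and holomorphic null curve $\Phi=f+\mathbf i f^*$. Let $\mu\in\mathbb C\setminus\{0,1\}$, $s=-\ln|\mu|$ and $t\in\mathbb R$ with $e^{s+it}=\frac{\bar\mu-1}{\bar\mu(1-\mu)}$. Then the simple factor dressing with parameter $\mu$ is $$f^\mu=\begin{pmatrix}f_0\\ f_1\\ \cos t\,(f_2\cosh s-f_3^*\sinh s)-\sin t\,(f_3\cosh s+f_2^*\sinh s)\\ \sin t\,(f_2\cosh s-f_3^*\sinh s)+\cos t\,(f_3\cosh s+f_2^*\sinh s)\end{pmatrix}$$ (coordinates w.r.t. $1,i,j,k$), and $f^\mu=\operatorname{Re}(\mathcal L^\mu\Phi)$, i.e. $f^\mu$ is a Goursat transform of $f$ with holomorphic null curve $\mathcal L^\mu\Phi$, where, with $w=s+\mathbf i t$, $$\mathcal L^\mu=\begin{pmatrix}1&0&0&0\\0&1&0&0\\0&0&\cosh w&\mathbf i\sinh w\\0&0&-\mathbf i\sinh w&\cosh w\end{pmatrix}\in O(4,\mathfrak C).$$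
   Context: Quaternions $\mathbb H$ with basis $1,i,j,k$, $\mathbb C=\operatorname{span}_{\mathbb R}\{1,i\}\subset\mathbb H$. $*\omega(X)=\omega(JX)$; conjugate surface $df^*=-*df$. The complexification $\mathfrak C^4=\mathbb R^4\oplus\mathbf i\mathbb R^4$ uses a complex unit $\mathbf i$ distinct from the quaternion $i$; $O(4,\mathfrak C)=\{\mathcal A:\mathcal A^t=\mathcal A^{-1}\}$. Simple factor dressing with parameter $\mu$: with $a=\frac{\mu+\mu^{-1}}2$, $b=i\frac{\mu^{-1}-\mu}2$, $$f^\mu=-f\frac{a-1}2+f^*\frac b2-\frac{b}{a-1}\Big(f\frac b2+f^*\frac{a-1}2\Big).$$ *)

From Stdlib Require Import Reals.
Open Scope R_scope.

Record quat := mkH { h0 : R; h1 : R; h2 : R; h3 : R }.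

Definition Hadd (p q : quat) : quat :=
  mkH (h0 p + h0 q) (h1 p + h1 q) (h2 p + h2 q) (h3 p + h3 q).
Definition Hopp (p : quat) : quat := mkH (- h0 p) (- h1 p) (- h2 p) (- h3 p).
Definition Hsub (p q : quat) : quat := Hadd p (Hopp q).
Definition Hscal (r : R) (p : quat) : quat :=
  mkH (r * h0 p) (r * h1 p) (r * h2 p) (r * h3 p).
Definition Hmul (p q : quat) : quat :=
  mkH (h0 p * h0 q - h1 p * h1 q - h2 p * h2 q - h3 p * h3 q)
      (h0 p * h1 q + h1 p * h0 q + h2 p * h3 q - h3 p * h2 q)
      (h0 p * h2 q - h1 p * h3 q + h2 p * h0 q + h3 p * h1 q)
      (h0 p * h3 q + h1 p * h2 q - h2 p * h1 q + h3 p * h0 q).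
Definition Hconj (p : quat) : quat := mkH (h0 p) (- h1 p) (- h2 p) (- h3 p).
Definition Hnorm2 (p : quat) : R := h0 p ^ 2 + h1 p ^ 2 + h2 p ^ 2 + h3 p ^ 2.
Definition Hinv (p : quat) : quat := Hscal (/ Hnorm2 p) (Hconj p).

Definition H1 : quat := mkH 1 0 0 0.
Definition Hi : quat := mkH 0 1 0 0.

(** C = span_R{1,i} inside H: the complex number x + y i. *)
Definition Cq (x y : R) : quat := mkH x y 0 0.

Definition dress_a (mu : quat) : quat := Hscal (1/2) (Hadd mu (Hinv mu)).
Definition dress_b (mu : quat) : quat :=
  Hmul Hi (Hscal (1/2) (Hsub (Hinv mu) mu)).

Definition dressing (mu f fs : quat) : quat :=
  let a1 := Hsub (dress_a mu) H1 in
  let b := dress_b mu in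
  Hadd (Hadd (Hopp (Hmul f (Hscal (1/2) a1))) (Hmul fs (Hscal (1/2) b)))
       (Hopp (Hmul (Hmul b (Hinv a1))
                   (Hadd (Hmul f (Hscal (1/2) b)) (Hmul fs (Hscal (1/2) a1))))).

(** Complex scalars of the complexification (unit bold-i, distinct from the
    quaternion i): z = re z + bold-i im z. *)
Record CC := mkC { re : R; im : R }.
Definition Cadd (z w : CC) : CC := mkC (re z + re w) (im z + im w).
Definition Cmul (z w : CC) : CC :=
  mkC (re z * re w - im z * im w) (re z * im w + im z * re w).
Definition Copp (z : CC) : CC := mkC (- re z) (- im z).
Definition Cscal (r : R) (z : CC) : CC := mkC (r * re z) (r * im z).
Definition C0 : CC := mkC 0 0.
Definition C1 : CC := mkC 1 0.
Definition Cbi : CC := mkC 0 1.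
Definition Cexp (z : CC) : CC := mkC (exp (re z) * cos (im z)) (exp (re z) * sin (im z)).
Definition Ccosh (w : CC) : CC := Cscal (1/2) (Cadd (Cexp w) (Cexp (Copp w))).
Definition Csinh (w : CC) : CC := Cscal (1/2) (Cadd (Cexp w) (Copp (Cexp (Copp w)))).

Definition qcoord (p : quat) (n : nat) : R :=
  match n with 0%nat => h0 p | 1%nat => h1 p | 2%nat => h2 p | _ => h3 p end.

Definition C4 := nat -> CC.
Definition mat4 := nat -> nat -> CC.

Definition nullcurve (f fs : quat) : C4 := fun n => mkC (qcoord f n) (qcoord fs n).

Definition matvec (L : mat4) (v : C4) : C4 := fun n =>
  Cadd (Cadd (Cmul (L n 0%nat) (v 0%nat)) (Cmul (L n 1%nat) (v 1%nat)))
       (Cadd (Cmul (L n 2%nat) (v 2%nat)) (Cmul (L n 3%nat) (v 3%nat))).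

Definition ReC4 (v : C4) : quat :=
  mkH (re (v 0%nat)) (re (v 1%nat)) (re (v 2%nat)) (re (v 3%nat)).

Definition inO4C (A : mat4) : Prop :=
  forall m n : nat, (m < 4)%nat -> (n < 4)%nat ->
    Cadd (Cadd (Cmul (A 0%nat m) (A 0%nat n)) (Cmul (A 1%nat m) (A 1%nat n)))
         (Cadd (Cmul (A 2%nat m) (A 2%nat n)) (Cmul (A 3%nat m) (A 3%nat n)))
    = (if Nat.eqb m n then C1 else C0).

Definition Lmu (s t : R) : mat4 := fun m n =>
  let w := mkC s t in
  match m, n with
  | 0%nat, 0%nat => C1
  | 1%nat, 1%nat => C1
  | 2%nat, 2%nat => Ccosh w
  | 2%nat, 3%nat => Cmul Cbi (Csinh w)
  | 3%nat, 2%nat => Copp (Cmul Cbi (Csinh w))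
  | 3%nat, 3%nat => Ccosh w
  | _, _ => C0
  end.

From Pilot Require Import Defs.
From Stdlib Require Import Reals Lra Psatz.
Open Scope R_scope.

(* Write a quaternion as z + w j with z, w in C (its [cpart] and [jpart]); let w^*
   be the j-part of f^*.  Left multiplication by a complex c gives c z + c w j and
   right multiplication gives z c + w c^* j.  Since a - 1 and b are complex, simple
   factor dressing multiplies z, w and w^* by complex coefficients built from a - 1,
   b and b / (a - 1).  For complex mu one has a^2 + b^2 = 1, hence
   (a - 1)^2 + b^2 = -2 (a - 1), which makes the action on z trivial, while w is
   sent to e^(it) (cosh s w + i sinh s w^* ).  This is the real part of L^mu Phi,
   and L^mu is complex orthogonal because cosh^2 w - sinh^2 w = 1. *)

Definition Hj : quat := mkH 0 0 1 0.
Definition cpart (p : quat) : quat := Cq (h0 p) (h1 p).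
Definition jpart (p : quat) : quat := Cq (h2 p) (h3 p).

Lemma quat_eq (p q : quat) :
  h0 p = h0 q -> h1 p = h1 q -> h2 p = h2 q -> h3 p = h3 q -> p = q.
Proof. destruct p, q; cbn; intros -> -> -> ->; reflexivity. Qed.

Lemma sum_sq_pos (x y : R) : (x, y) <> (0, 0) -> 0 < x ^ 2 + y ^ 2.
Proof.
  intro hxy; destruct (Req_dec x 0) as [-> | hx]; [destruct (Req_dec y 0) as [-> | hy] |].
  - contradiction.
  - nra.
  - nra.
Qed.

Ltac quat_coords :=
  apply quat_eq; cbn [cpart jpart Hconj Hsub Hadd Hopp Hscal Hmul Cq H1 Hi Hj h0 h1 h2 h3].

Lemma Hnorm2_Cq (x y : R) : Hnorm2 (Cq x y) = x ^ 2 + y ^ 2.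
Proof. unfold Hnorm2; cbn [h0 h1 h2 h3 Cq]; ring. Qed.

Lemma Hinv_Cq (x y : R) :
  Hinv (Cq x y) = Cq (x / (x ^ 2 + y ^ 2)) (- y / (x ^ 2 + y ^ 2)).
Proof. unfold Hinv; rewrite Hnorm2_Cq; quat_coords; unfold Rdiv; ring. Qed.

Lemma Hmul_Cq (x y u v : R) : Hmul (Cq x y) (Cq u v) = Cq (x * u - y * v) (x * v + y * u).
Proof. quat_coords; ring. Qed.

Lemma H1_Cq : H1 = Cq 1 0.
Proof. reflexivity. Qed.

Lemma Hsub_Cq (x y u v : R) : Hsub (Cq x y) (Cq u v) = Cq (x - u) (y - v).
Proof. quat_coords; ring. Qed.

Lemma dressing_complex_coeffs (mu f fs : quat) (x y u v : R) :
  let A := Hsub (dress_a mu) H1 in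
  let B := dress_b mu in
  let K := Hmul B (Hinv A) in
  A = Cq x y -> B = Cq u v ->
  dressing mu f fs
  = Hadd (Hadd (Hmul (cpart f) (Hscal (- (1 / 2)) (Hadd A (Hmul K B))))
               (Hmul (cpart fs) (Hscal (1 / 2) (Hsub B (Hmul K A)))))
         (Hmul (Hadd (Hmul (jpart f) (Hscal (- (1 / 2)) (Hadd (Hconj A) (Hmul K (Hconj B)))))
                     (Hmul (jpart fs) (Hscal (1 / 2) (Hsub (Hconj B) (Hmul K (Hconj A))))))
               Hj).
Proof.
  cbv zeta; intros hA hB. unfold dressing; cbv zeta; rewrite hA, hB, Hinv_Cq, Hmul_Cq.
  destruct f as [a0 a1 a2 a3]; destruct fs as [b0 b1 b2 b3].
  quat_coords; ring.
Qed.

Section SimpleFactorDressing.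

Variables mr mi : R.
Let r := mr ^ 2 + mi ^ 2.
Let d := (mr - 1) ^ 2 + mi ^ 2.
Hypothesis r_neq0 : r <> 0.
Hypothesis d_neq0 : d <> 0.

Let A := Hsub (dress_a (Cq mr mi)) H1.
Let B := dress_b (Cq mr mi).
Let K := Hmul B (Hinv A).
Let expw := Hmul (Hsub (Cq mr (- mi)) H1) (Hinv (Hmul (Cq mr (- mi)) (Hsub H1 (Cq mr mi)))).

Lemma dress_a_sub1_Cq : A = Cq (mr * (1 + / r) / 2 - 1) (mi * (1 - / r) / 2).
Proof. unfold A, dress_a; rewrite Hinv_Cq; quat_coords; fold r; field; auto. Qed.

Lemma dress_b_Cq : B = Cq (mi * (/ r + 1) / 2) (mr * (/ r - 1) / 2).
Proof. unfold B, dress_b; rewrite Hinv_Cq; quat_coords; fold r; field; auto. Qed.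

(* b / (a - 1) = i (1 + mu) / (1 - mu). *)
Lemma dress_ratio_Cq : K = Cq (- 2 * mi / d) ((1 - r) / d).
Proof.
  unfold K; rewrite dress_a_sub1_Cq, dress_b_Cq, Hinv_Cq, Hmul_Cq.
  assert (hN : (mr * (1 + / r) / 2 - 1) ^ 2 + (mi * (1 - / r) / 2) ^ 2 = d ^ 2 / (4 * r)).
  { unfold d, r; field; exact r_neq0. }
  rewrite hN; quat_coords; unfold d, r; field; split; auto.
Qed.

(* expw = (mu^* - 1) / (mu^* (1 - mu)) = - mu (1 - mu^* )^2 / (|mu|^2 |1 - mu|^2). *)
Lemma expw_Cq : expw = Cq (- (mr * ((1 - mr) ^ 2 - mi ^ 2) - 2 * mi ^ 2 * (1 - mr)) / (r * d))
                    (- (2 * mr * mi * (1 - mr) + mi * ((1 - mr) ^ 2 - mi ^ 2)) / (r * d)).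
Proof.
  unfold expw; rewrite H1_Cq, !Hsub_Cq, Hmul_Cq, Hinv_Cq, Hmul_Cq.
  assert (hN : (mr * (1 - mr) - - mi * (0 - mi)) ^ 2 + (mr * (0 - mi) + - mi * (1 - mr)) ^ 2
               = r * d) by (unfold r, d; ring).
  rewrite hN; quat_coords; unfold d, r in *; field; split; auto.
Qed.

Lemma dress_cpart_coeff : Hscal (- (1 / 2)) (Hadd A (Hmul K B)) = H1.
Proof.
  rewrite dress_ratio_Cq, dress_a_sub1_Cq, dress_b_Cq; quat_coords;
    unfold d, r in *; field; split; auto.
Qed.

Lemma dress_cpart_fs_coeff : Hscal (1 / 2) (Hsub B (Hmul K A)) = Cq 0 0.
Proof.
  rewrite dress_ratio_Cq, dress_a_sub1_Cq, dress_b_Cq; quat_coords;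
    unfold d, r in *; field; split; auto.
Qed.

Lemma dress_jpart_f_coeff :
  Hscal (- (1 / 2)) (Hadd (Hconj A) (Hmul K (Hconj B))) = Hscal ((1 + r) / 2) expw.
Proof.
  rewrite dress_ratio_Cq, dress_a_sub1_Cq, dress_b_Cq, expw_Cq; quat_coords;
    unfold d, r in *; field; split; auto.
Qed.

Lemma dress_jpart_fs_coeff :
  Hscal (1 / 2) (Hsub (Hconj B) (Hmul K (Hconj A))) = Hscal ((1 - r) / 2) (Hmul Hi expw).
Proof.
  rewrite dress_ratio_Cq, dress_a_sub1_Cq, dress_b_Cq, expw_Cq; quat_coords;
    unfold d, r in *; field; split; auto.
Qed.

Lemma dressing_Cq (f fs : quat) :
  dressing (Cq mr mi) f fs
  = Hadd (cpart f) (Hmul (Hadd (Hmul (jpart f) (Hscal ((1 + r) / 2) expw))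
                               (Hmul (jpart fs) (Hscal ((1 - r) / 2) (Hmul Hi expw)))) Hj).
Proof.
  rewrite (dressing_complex_coeffs _ _ _ _ _ _ _ dress_a_sub1_Cq dress_b_Cq); fold A B K.
  rewrite dress_cpart_coeff, dress_cpart_fs_coeff, dress_jpart_f_coeff, dress_jpart_fs_coeff.
  quat_coords; ring.
Qed.

End SimpleFactorDressing.

Definition dressing_formula (s t : R) (f fs : quat) : quat :=
  mkH (h0 f) (h1 f)
      (cos t * (h2 f * cosh s - h3 fs * sinh s) - sin t * (h3 f * cosh s + h2 fs * sinh s))
      (sin t * (h2 f * cosh s - h3 fs * sinh s) + cos t * (h3 f * cosh s + h2 fs * sinh s)).

Lemma dressing_formula_exp (s t : R) (f fs : quat) :
  let expw := Cq (exp s * cos t) (exp s * sin t) in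
  Hadd (cpart f) (Hmul (Hadd (Hmul (jpart f) (Hscal ((1 + exp (- s) ^ 2) / 2) expw))
                             (Hmul (jpart fs) (Hscal ((1 - exp (- s) ^ 2) / 2) (Hmul Hi expw)))) Hj)
  = dressing_formula s t f fs.
Proof.
  pose proof (exp_pos s) as exp_s_pos.
  unfold dressing_formula, cosh, sinh; rewrite exp_Ropp.
  quat_coords; field; lra.
Qed.

Lemma ReC4_Lmu_nullcurve (s t : R) (f fs : quat) :
  ReC4 (matvec (Lmu s t) (nullcurve f fs)) = dressing_formula s t f fs.
Proof.
  unfold dressing_formula, cosh, sinh; quat_coords.
  all: unfold ReC4, matvec, Lmu, nullcurve, Ccosh, Csinh, Cexp, Cmul, Cadd, Copp, Cscal,
         Cbi, Defs.C1, Defs.C0, qcoord;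
    cbn [re im h0 h1 h2 h3]; rewrite ?cos_neg, ?sin_neg; field.
Qed.

Lemma CC_eq (z w : CC) : re z = re w -> im z = im w -> z = w.
Proof. destruct z, w; cbn; intros -> ->; reflexivity. Qed.

Lemma Ccosh_sq_sub_Csinh_sq (w : CC) :
  Cadd (Cmul (Ccosh w) (Ccosh w)) (Copp (Cmul (Csinh w) (Csinh w))) = Defs.C1.
Proof.
  pose proof (exp_pos (re w)) as exp_pos_w.
  pose proof (sin2_cos2 (im w)) as pythagoras; unfold Rsqr in pythagoras.
  apply CC_eq; unfold Ccosh, Csinh, Cexp, Cmul, Cadd, Copp, Cscal, Defs.C1; cbn [re im];
    rewrite cos_neg, sin_neg, exp_Ropp.
  - transitivity (sin (im w) * sin (im w) + cos (im w) * cos (im w)); [field; lra | exact pythagoras].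
  - field; lra.
Qed.

Lemma Lmu_inO4C (s t : R) : inO4C (Lmu s t).
Proof.
  pose proof (Ccosh_sq_sub_Csinh_sq (mkC s t)) as cosh_sinh.
  unfold inO4C, Lmu; cbv zeta; revert cosh_sinh.
  destruct (Ccosh (mkC s t)) as [c0 c1], (Csinh (mkC s t)) as [s0 s1].
  unfold Cadd, Cmul, Copp, Cbi, Defs.C0, Defs.C1; cbn [re im]; intros cosh_sinh.
  injection cosh_sinh as cosh_sinh_re cosh_sinh_im.
  intros m n hm hn.
  destruct m as [| [| [| [| m]]]]; try lia; destruct n as [| [| [| [| n]]]]; try lia;
    cbn [Nat.eqb]; apply CC_eq; cbn [re im]; lra.
Qed.

Theorem mainTheorem12 (M : Type) (f fs : M -> quat) (mr mi s t : R)
  (Hmu0 : (mr, mi) <> (0, 0)) (Hmu1 : (mr, mi) <> (1, 0))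
  (Hs : s = - ln (sqrt (mr ^ 2 + mi ^ 2)))
  (Ht : Cq (exp s * cos t) (exp s * sin t)
        = Hmul (Hsub (Cq mr (- mi)) H1)
               (Hinv (Hmul (Cq mr (- mi)) (Hsub H1 (Cq mr mi))))) :
  (forall p : M,
     dressing (Cq mr mi) (f p) (fs p)
     = mkH (h0 (f p)) (h1 (f p))
           (cos t * (h2 (f p) * cosh s - h3 (fs p) * sinh s)
            - sin t * (h3 (f p) * cosh s + h2 (fs p) * sinh s))
           (sin t * (h2 (f p) * cosh s - h3 (fs p) * sinh s)
            + cos t * (h3 (f p) * cosh s + h2 (fs p) * sinh s)))
  /\ (forall p : M,
        dressing (Cq mr mi) (f p) (fs p)
        = ReC4 (matvec (Lmu s t) (nullcurve (f p) (fs p))))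
  /\ inO4C (Lmu s t).
Proof.
  assert (r_pos : 0 < mr ^ 2 + mi ^ 2) by exact (sum_sq_pos _ _ Hmu0).
  assert (d_pos : 0 < (mr - 1) ^ 2 + mi ^ 2).
  { apply sum_sq_pos; intros e; injection e as e1 e2; apply Hmu1; f_equal; lra. }
  assert (r_exp : mr ^ 2 + mi ^ 2 = exp (- s) ^ 2).
  { rewrite Hs, Ropp_involutive, exp_ln by (apply sqrt_lt_R0; exact r_pos).
    rewrite pow2_sqrt; lra. }
  assert (closed_form : forall p : M,
            dressing (Cq mr mi) (f p) (fs p) = dressing_formula s t (f p) (fs p)).
  { intros p; rewrite dressing_Cq, <- Ht, r_exp by lra; apply dressing_formula_exp. }
  split; [exact closed_form | split; [| apply Lmu_inO4C]].
  intros p; rewrite closed_form; symmetry; apply ReC4_Lmu_nullcurve.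
Qed.
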